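(* Let $(X,d)$ be a metric space, $x\in X$, $A$ a complex Banach algebra and $\varphi\in\Delta(A)$. Let $D:Lip_dX\to\mathbb{C}$ be a bounded linear functional, and define $D_\varphi:Lip_d(X,A)\to\mathbb{C}$ by $D_\varphi(f)=D(\varphi\circ f)$. Then the following are equivalent: (i) $D$ is a point derivation at $x$, i.e. $D(fg)=f(x)D(g)+g(x)D(f)$ for all $f,g\in Lip_dX$; (ii) $D_\varphi$ is an $(x,\varphi)$-point derivation on $Lip_d(X,A)$, i.e. $D_\varphi(fg)=\varphi(f(x))D_\varphi(g)+\varphi(g(x))D_\varphi(f)$ for all $f,g\in Lip_d(X,A)$.
   Context: For a Banach algebra $A$, $Lip_d(X,A)$ is the Banach algebra (pointwise operations) of bounded functions $f:X\to A$ with $P_{d,A}(f)=\sup_{x\neq y}\|f(x)-f(y)\|_A/d(x,y)<\infty$, normed by $\|f\|_{\infty,A}+P_{d,A}(f)$; $Lip_dX=Lip_d(X,\mathbb{C})$. $\Delta(A)$ is the set of nonzero multiplicative linear functionals on $A$ (for $f\in Lip_d(X,A)$, $\varphi\circ f\in Lip_dX$). *)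

From HB Require Import structures.
From mathcomp Require Import all_boot all_order all_algebra.
From mathcomp Require Import all_classical all_reals all_analysis.
From mathcomp Require Import complex.
Set Implicit Arguments. Unset Strict Implicit. Unset Printing Implicit Defensive.
Import Order.TTheory GRing.Theory Num.Theory.
Import numFieldNormedType.Exports.
Local Open Scope ring_scope.
Local Open Scope complex_scope.

Section Defs.
Variable R : realType.
Local Notation C := R[i].

Definition is_metric (X : Type) (d : X -> X -> R) : Prop :=
  [/\ forall x y, 0 <= d x y,
      forall x y, d x y = 0 <-> x = y,
      forall x y, d x y = d y x &
      forall x y z, d x z <= d x y + d y z].

(* membership in Lip_d(X,V): bounded and d-Lipschitz (V a complex normed space;
   the norm of V takes real values, stored in C = R[i]) *)
Definition is_lip (X : Type) (d : X -> X -> R) (V : normedModType C)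
    (f : X -> V) : Prop :=
  (exists B : R, forall y, `|f y| <= B%:C) /\
  (exists L : R, forall y z, `|f y - f z| <= (L * d y z)%:C).

(* complex Banach algebra multiplication on the complete normed space A
   (not assumed unital or commutative) *)
Definition banach_algebra_mul (A : completeNormedModType C) (mul : A -> A -> A)
  : Prop :=
  [/\ forall a b c, mul a (mul b c) = mul (mul a b) c,
      forall a b c, mul a (b + c) = mul a b + mul a c,
      forall a b c, mul (a + b) c = mul a c + mul b c,
      forall (k : C) a b, mul (k *: a) b = k *: mul a b &
      forall (k : C) a b, mul a (k *: b) = k *: mul a b ] /\
  (forall a b, `|mul a b| <= `|a| * `|b|).

Definition in_Delta (A : completeNormedModType C) (mul : A -> A -> A)
    (phi : A -> C) : Prop :=
  [/\ forall a b, phi (a + b) = phi a + phi b,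
      forall (k : C) a, phi (k *: a) = k * phi a,
      forall a b, phi (mul a b) = phi a * phi b &
      exists a, phi a != 0].

(* The norm of Lip_d X is
   ||f||_oo + P_d(f); |D f| <= M (||f||_oo + P_d(f)) is written out as
   |D f| <= M (B + L) for every sup-bound B and every Lipschitz constant L. *)
Definition bounded_linear_lip (X : Type) (d : X -> X -> R)
    (D : (X -> C) -> C) : Prop :=
  [/\ forall f g : X -> C, @is_lip X d C^o f -> @is_lip X d C^o g ->
        D (fun y => f y + g y) = D f + D g,
      forall (k : C) (f : X -> C), @is_lip X d C^o f -> D (fun y => k * f y) = k * D f &
      exists M : R, forall f : X -> C, @is_lip X d C^o f ->
        forall B L : R, (forall y, `|f y| <= B%:C) ->
          (forall y z, `|f y - f z| <= (L * d y z)%:C) ->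
          `|D f| <= (M * (B + L))%:C ].

Definition point_derivation (X : Type) (d : X -> X -> R) (x : X)
    (D : (X -> C) -> C) : Prop :=
  forall f g : X -> C, @is_lip X d C^o f -> @is_lip X d C^o g ->
    D (fun y => f y * g y) = f x * D g + g x * D f.

Definition point_derivation_A (X : Type) (d : X -> X -> R) (x : X)
    (A : completeNormedModType C) (mul : A -> A -> A) (phi : A -> C)
    (E : (X -> A) -> C) : Prop :=
  forall f g : X -> A, is_lip d f -> is_lip d g ->
    E (fun y => mul (f y) (g y)) = phi (f x) * E g + phi (g x) * E f.

End Defs.

From HB Require Import structures.
From mathcomp Require Import all_boot all_order all_algebra.
From mathcomp Require Import all_classical all_reals all_analysis.
From mathcomp Require Import complex.
Set Implicit Arguments.
Unset Strict Implicit.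
Unset Printing Implicit Defensive.
Import Order.TTheory GRing.Theory Num.Theory.
Import numFieldNormedType.Exports.
Local Open Scope ring_scope.
Local Open Scope complex_scope.

(* A character phi of a Banach algebra is contractive: if |phi a| > |a|, then
   b := a / phi a has |b| < 1 and phi b = 1, the Neumann series
   c := b + b^2 + ... solves c = b + b c, and applying phi gives
   phi c = 1 + phi c.  Hence phi \o f is Lipschitz whenever f is, and (i)
   implies (ii) because phi (f g) = (phi \o f) (phi \o g).  Conversely, fix e
   with phi e = 1: a scalar function h lifts to y |-> h y *: e, whose
   composite with phi is h again, and (ii) applied to the lifts of f and g
   is (i). *)

Section ComplexNorm.
Variable R : realType.

Lemma ge0_ReK (z : R[i]) : 0 <= z -> (complex.Re z)%:C = z.
Proof. by case: z => a b /ger0_Im /= ->. Qed.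

Lemma normr_ReK (V : normedModType R[i]) (v : V) : (complex.Re `|v|)%:C = `|v|.
Proof. exact: ge0_ReK. Qed.

End ComplexNorm.

Section BanachAlgebra.
Variables (R : realType) (A : completeNormedModType R[i]) (mul : A -> A -> A).
Hypothesis hA : banach_algebra_mul mul.
Local Open Scope classical_set_scope.

Lemma bmulDr a b c : mul a (b + c) = mul a b + mul a c.
Proof. by case: hA => -[]. Qed.

Lemma bmulZr (k : R[i]) a b : mul a (k *: b) = k *: mul a b.
Proof. by case: hA => -[]. Qed.

Lemma bmulr0 a : mul a 0 = 0.
Proof. by rewrite -(scale0r 0) bmulZr !scale0r. Qed.

Lemma bmulrBr a b c : mul a (b - c) = mul a b - mul a c.
Proof. by rewrite bmulDr -scaleN1r bmulZr scaleN1r. Qed.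

Lemma bmulr_sum a n (u : nat -> A) :
  mul a (\sum_(0 <= k < n) u k) = \sum_(0 <= k < n) mul a (u k).
Proof.
elim: n => [|n IHn]; first by rewrite !big_geq // bmulr0.
by rewrite !big_nat_recr //= bmulDr IHn.
Qed.

Lemma norm_bmul a b : `|mul a b| <= `|a| * `|b|.
Proof. by case: hA. Qed.

(* [powS b k] is b^(k+1): the algebra need not have a unit. *)
Fixpoint powS (b : A) (k : nat) : A :=
  if k is k'.+1 then mul b (powS b k') else b.

Lemma norm_powS b k : `|powS b k| <= `|b| ^+ k.+1.
Proof.
elim: k => [|k IHk] /=; first by rewrite expr1.
by rewrite exprS (le_trans (norm_bmul _ _)) // ler_wpM2l.
Qed.

Lemma series_powS b n : series (powS b) n.+1 = b + mul b (series (powS b) n).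
Proof. by rewrite /series /= big_nat_recl // bmulr_sum. Qed.

Lemma cvg_series_powS b : `|b| < 1 -> cvgn (series (powS b)).
Proof.
move=> b1; pose q := complex.Re `|b|.
have q0 : 0 <= q by rewrite -ler0c normr_ReK.
have q1 : `|q| < 1 by rewrite ger0_norm // -ltcR rmorph1 normr_ReK.
apply/cauchy_cvgP/cauchy_seriesP => e e0.
have Re_e0 : 0 < complex.Re e by rewrite -ltcR ge0_ReK ?ltW.
have /cauchy_cvgP/cauchy_seriesP/(_ _ Re_e0) :=
  is_cvg_geometric_series (a := q) q1.
apply: filterS => -[n m] /= geo_small.
rewrite -(ge0_ReK (ltW e0)) (le_lt_trans (ler_norm_sum _ _ _)) //.
apply: (@le_lt_trans _ _ (\sum_(n <= k < m) geometric q q k)%:C).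
  rewrite rmorph_sum ler_sum // => k _.
  rewrite /geometric /= -exprS rmorphXn /= normr_ReK; exact: norm_powS.
by rewrite ltcR (le_lt_trans (ler_norm _)).
Qed.

Lemma cvg_bmull b (u : nat -> A) c :
  u @ \oo --> c -> (fun n => mul b (u n)) @ \oo --> mul b c.
Proof.
move=> /cvgrPdist_lt uc; apply/cvgrPdist_lt => e e0.
have b1 : 0 < `|b| + 1 by rewrite ltr_wpDl.
near=> n; rewrite -bmulrBr (le_lt_trans (norm_bmul _ _)) //.
apply: (@le_lt_trans _ _ (`|b| * (e / (`|b| + 1)))).
  by rewrite ler_wpM2l // ltW //; near: n; apply: uc; rewrite divr_gt0.
by rewrite mulrA ltr_pdivrMr // mulrDr mulr1 mulrC ltrDl.
Unshelve. all: by end_near. Qed.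

Lemma quasi_inverse_exists b : `|b| < 1 -> exists c, c = b + mul b c.
Proof.
move=> /cvg_series_powS S_cvg; exists (limn (series (powS b))).
set c := limn _; apply: cvg_lim => //.
suff : [sequence series (powS b) n.+1]_n @ \oo --> b + mul b c.
  by rewrite cvg_shiftS.
rewrite /= (funext (series_powS b)).
by apply: cvgD; [exact: cvg_cst | exact: cvg_bmull].
Qed.

End BanachAlgebra.

Lemma is_lip_scaler (R : realType) (X : Type) (d : X -> X -> R)
    (V : normedModType R[i]) (h : X -> R[i]) (v : V) :
  @is_lip R X d R[i]^o h -> is_lip d (fun y => h y *: v).
Proof.
case=> -[B hB] [L hL].
split; [exists (B * complex.Re `|v|) | exists (L * complex.Re `|v|)] => y.
  by rewrite normrZ rmorphM /= normr_ReK ler_wpM2r.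
by move=> z; rewrite -scalerBl normrZ mulrAC rmorphM /= normr_ReK ler_wpM2r.
Qed.

Section Character.
Variables (R : realType) (A : completeNormedModType R[i]) (mul : A -> A -> A).
Variable phi : A -> R[i].
Hypotheses (hA : banach_algebra_mul mul) (hphi : in_Delta mul phi).

Lemma characterD a b : phi (a + b) = phi a + phi b.
Proof. by case: hphi. Qed.

Lemma characterZ (k : R[i]) a : phi (k *: a) = k * phi a.
Proof. by case: hphi. Qed.

Lemma characterM a b : phi (mul a b) = phi a * phi b.
Proof. by case: hphi. Qed.

Lemma characterB a b : phi (a - b) = phi a - phi b.
Proof. by rewrite characterD -scaleN1r characterZ mulN1r. Qed.

Lemma exists_character_eq1 : exists e, phi e = 1.
Proof.
case: hphi => _ _ _ [a pa0].
by exists ((phi a)^-1 *: a); rewrite characterZ mulVf.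
Qed.

Lemma norm_character_le a : `|phi a| <= `|a|.
Proof.
rewrite real_leNgt ?normr_real //; apply/negP => lt_a.
have pa0 : phi a != 0 by rewrite -normr_gt0 (le_lt_trans _ lt_a).
pose b := (phi a)^-1 *: a.
have pb : phi b = 1 by rewrite characterZ mulVf.
have b1 : `|b| < 1 by rewrite normrZ normfV mulrC ltr_pdivrMr ?mul1r ?normr_gt0.
have [c c_fix] := quasi_inverse_exists hA b1.
have := congr1 phi c_fix; rewrite characterD characterM pb mul1r.
by rewrite -{1}[phi c]add0r => /addIr /eqP; rewrite eq_sym oner_eq0.
Qed.

Lemma is_lip_character (X : Type) (d : X -> X -> R) (f : X -> A) :
  is_lip d f -> @is_lip R X d R[i]^o (fun y => phi (f y)).
Proof.
case=> -[B hB] [L hL]; split; [exists B | exists L] => y.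
  exact: le_trans (norm_character_le _) (hB y).
by move=> z; rewrite /= -characterB (le_trans (norm_character_le _)).
Qed.

Section PointDerivation.
Variables (X : Type) (d : X -> X -> R) (x : X) (D : (X -> R[i]) -> R[i]).

Lemma point_derivation_comp_character :
  point_derivation d x D ->
  point_derivation_A d x mul phi (fun f => D (fun y => phi (f y))).
Proof.
move=> Dder f g lip_f lip_g /=.
rewrite (funext (fun y => characterM (f y) (g y))).
exact: Dder (is_lip_character lip_f) (is_lip_character lip_g).
Qed.

Lemma point_derivation_of_comp_character :
  point_derivation_A d x mul phi (fun f => D (fun y => phi (f y))) ->
  point_derivation d x D.
Proof.
move=> Dder f g lip_f lip_g; have [e pe] := exists_character_eq1.
have phi_scale h : (fun y => phi (h y *: e)) = h.
  by apply: funext => y; rewrite characterZ pe mulr1.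
have := Dder _ _ (is_lip_scaler e lip_f) (is_lip_scaler e lip_g).
rewrite /= !phi_scale !characterZ pe !mulr1 => <-.
by congr D; apply: funext => y; rewrite characterM !characterZ pe !mulr1.
Qed.

End PointDerivation.
End Character.

Theorem theorem2p17 (R : realType) (X : Type) (d : X -> X -> R)
  (hd : is_metric d) (x : X)
  (A : completeNormedModType R[i]) (mul : A -> A -> A)
  (hA : banach_algebra_mul mul)
  (phi : A -> R[i]) (hphi : in_Delta mul phi)
  (D : (X -> R[i]) -> R[i]) (hD : bounded_linear_lip d D) :
  point_derivation d x D <->
  point_derivation_A d x mul phi (fun f : X -> A => D (fun y => phi (f y))).
Proof.
split; first exact: point_derivation_comp_character.
exact: point_derivation_of_comp_character.
Qed.
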